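(* In the Jolteon protocol described in the context, for every two globally direct-committed blocks $B,B'$, either $B\longleftarrow^* B'$ or $B'\longleftarrow^* B$.
   Context: Jolteon protocol. There are $n=3f+1$ replicas, at most $f$ Byzantine, the rest honest; reliable authenticated channels; ideal threshold signatures in which $2f+1$ shares on the same message from distinct replicas combine into a threshold signature. A block is $B=(id,qc,tc,r,v,txn)$, with $qc$ a quorum certificate of its parent, $tc$ a timeout certificate or $\bot$, round $r$, view $v=0$, transactions $txn$, and $id$ a collision-resistant hash of the contents. A quorum certificate (QC) for $B$ is a threshold signature on $(B.id,B.r,B.v)$ from $2f+1$ shares (votes); $qc.r=B.r$; $B$ is certified if a QC for it exists; a genesis block of round $0$ has a QC. QCs are compared by round. Notation: $B_i\longleftarrow QC_i\longleftarrow B_{i+1}$ means $QC_i$ certifies $B_i$ and is contained in $B_{i+1}$; $B\longleftarrow^* B'$ ($B'$ extends $B$) means there is such a sequence (possibly of length zero) from $B$ to $B'$. A timeout message for round $r$ is a share on $r$ with the sender's $qc_{high}$; a timeout certificate (TC) for round $r$ is a threshold signature on $r$ from $2f+1$ timeout messages together with their $2f+1$ $qc_{high}$'s (all of round $<r$). Each round $r$ has a leader $L_r$ (round robin). Each replica keeps $r_{vote}=0$, $r_{cur}=1$, $qc_{high}$ = genesis QC. Propose: upon entering round $r$, $L_r$ multicasts $B=(id,qc_{high},tc,r,0,txn)$, with $tc$ the round-$(r-1)$ TC if $L_r$ entered round $r$ by receiving it, else $\bot$. Vote: upon the first valid proposal $B=(id,qc,tc,r,v,txn)$ from $L_r$,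 execute Advance Round, Lock, Commit; then if $r=r_{cur}$, $v=v_{cur}=0$, $r>r_{vote}$, and either $r=qc.r+1$ or ($r=tc.r+1$ and $qc.r\ge\max\{q.r: q$ a $qc_{high}$ in $tc\}$), send a share on $(id,r,v)$ to $L_{r+1}$ and set $r_{vote}\gets r$. Lock: upon seeing a valid QC $qc$ (formed from votes or contained in a proposal, timeout message or TC), set $qc_{high}\gets\max(qc_{high},qc)$. Commit: whenever there are two certified blocks $B,B'$ with $B'.qc$ certifying $B$ and $B'.r=B.r+1$, commit $B$ and all its ancestors. Advance Round: set $r_{cur}\gets\max(r_{cur},r)$ upon receiving or forming a round-$(r-1)$ QC or TC. Timer: upon entering round $r$, send the round-$(r-1)$ TC to $L_r$ if held and reset a timer; on expiry stop voting in round $r_{cur}$ and multicast a timeout message; upon a valid timeout message or TC execute Advance Round, Lock, Commit; upon $2f+1$ timeout messages form a TC. Definition: a block $B$ is globally direct-committed if $f+1$ honest replicas each successfully perform the Vote step on a proposal of a block $B'$ in round $B.r+1$ such that $B'.qc$ certifies $B$ (these Vote calls invoke Lock, setting $qc_{high}\gets B'.qc$, and produce $f+1$ matching votes). *)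

From mathcomp Require Import all_boot.
From Stdlib Require List.

Set Implicit Arguments.
Unset Strict Implicit.
Unset Printing Implicit Defensive.

Section Jolteon.

Variable f : nat.     (* at most f Byzantine replicas *)
Variable Txn : Type.

Definition nrep := (3 * f).+1.
Notation replica := 'I_nrep.

(* Blocks B = (id, qc, tc, r, v, txn).  The id is an ideal (injective)
   collision-resistant hash of the contents, so a block is identified with its
   contents; the qc field of a block is represented by the block it certifies
   (a QC is a threshold signature on (B.id, B.r, B.v), so it determines B and
   qc.r = B.r).  A TC for round r is represented by r together with the 2f+1
   timeout messages it was built from: (sender, sender's qc_high). *)
Inductive block : Type :=
| Genesis
| Blk of block & option tcert & nat & nat & Txn   (* qc, tc, r, v, txn *)
with tcert : Type :=
| TC of nat & seq (replica * block).

Definition bround (b : block) : nat :=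
  match b with Genesis => 0 | Blk _ _ r _ _ => r end.
Definition tcround (t : tcert) : nat := let: TC r _ := t in r.
Definition tchighs (t : tcert) : seq (replica * block) := let: TC _ hs := t in hs.
Definition max_high_round (t : tcert) : nat :=
  foldr maxn 0 (map (fun p => bround p.2) (tchighs t)).

Inductive extends (B : block) : block -> Prop :=
| ext_refl : extends B B
| ext_step p tc r v txn : extends B p -> extends B (Blk p tc r v txn).

(* Messages sent by honest replicas (signed; authenticated channels). *)
Inductive msg : Type :=
| MProposal of block
| MVote of block                (* share on (B.id, B.r, B.v), sent to L_{r+1} *)
| MTimeout of nat & block.      (* share on r, with sender's qc_high *)

Definition leader (r : nat) : replica := inord (r %% nrep).

Record lstate := LState {
  r_vote : nat;
  r_cur : nat;
  qc_high : block;
  entered_tc : option tcert;  (* round-(r_cur-1) TC if r_cur was entered via it *)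
  r_stop : nat;               (* last round in which the timer expired (voting stopped) *)
  r_prop : nat;               (* last round in which this replica proposed as leader *)
  seen : nat -> bool          (* rounds for which a valid proposal was already processed *)
}.

Definition init_lstate : lstate := LState 0 1 Genesis None 0 0 (fun _ => false).

Record gstate := GState {
  lst : replica -> lstate;
  log : seq (replica * msg)   (* all messages ever sent by honest replicas *)
}.

Definition init_gstate : gstate := GState (fun _ => init_lstate) [::].

Variable honest : {set replica}.

(* Ideal threshold signatures: Byzantine replicas can produce shares on
   anything; honest replicas only the shares they actually sent. *)
Definition has_vote_share (lg : seq (replica * msg)) (i : replica) (b : block) : Prop :=
  i \notin honest \/ List.In (i, MVote b) lg.

Definition valid_qc (lg : seq (replica * msg)) (b : block) : Prop :=
  b = Genesis \/
  exists S : {set replica}, 2 * f + 1 <= #|S| /\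
    forall i, i \in S -> has_vote_share lg i b.

Definition valid_tc (lg : seq (replica * msg)) (t : tcert) : Prop :=
  let: TC r hs := t in
  size hs = 2 * f + 1 /\ uniq (map fst hs) /\
  forall j q, List.In (j, q) hs ->
    [/\ valid_qc lg q, bround q < r &
        (j \notin honest \/ List.In (j, MTimeout r q) lg)].

Definition valid_proposal (lg : seq (replica * msg)) (B : block) : Prop :=
  match B with
  | Genesis => False
  | Blk p otc _ _ _ =>
      valid_qc lg p /\ (forall t, otc = Some t -> valid_tc lg t)
  end.

Definition maxqc (a b : block) : block := if bround a < bround b then b else a.

Definition see_qc (s : lstate) (b : block) : lstate :=
  LState (r_vote s) (maxn (r_cur s) (bround b).+1) (maxqc (qc_high s) b)
         (if r_cur s < (bround b).+1 then None else entered_tc s)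
         (r_stop s) (r_prop s) (seen s).

Definition see_tc (s : lstate) (t : tcert) : lstate :=
  LState (r_vote s) (maxn (r_cur s) (tcround t).+1)
         (foldl (fun acc p => maxqc acc p.2) (qc_high s) (tchighs t))
         (if r_cur s < (tcround t).+1 then Some t else entered_tc s)
         (r_stop s) (r_prop s) (seen s).

Definition proc_prop (s : lstate) (B : block) : lstate :=
  match B with
  | Genesis => s
  | Blk p otc r _ _ =>
      let s1 := see_qc s p in
      let s2 := match otc with Some t => see_tc s1 t | None => s1 end in
      LState (r_vote s2) (r_cur s2) (qc_high s2) (entered_tc s2) (r_stop s2)
             (r_prop s2) (fun k => (k == r) || seen s2 k)
  end.

Definition vote_ok (s : lstate) (B : block) : Prop :=
  match B with
  | Genesis => False
  | Blk p otc r v _ =>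
      [/\ r = r_cur s, v = 0, r_vote s < r, r_stop s < r &
          (r = (bround p).+1 \/
           exists t, [/\ otc = Some t, r = (tcround t).+1 &
                        max_high_round t <= bround p])]
  end.

Definition set_vote (s : lstate) (r : nat) : lstate :=
  LState r (r_cur s) (qc_high s) (entered_tc s) (r_stop s) (r_prop s) (seen s).
Definition set_stop (s : lstate) : lstate :=
  LState (r_vote s) (r_cur s) (qc_high s) (entered_tc s) (r_cur s) (r_prop s) (seen s).
Definition set_prop (s : lstate) : lstate :=
  LState (r_vote s) (r_cur s) (qc_high s) (entered_tc s) (r_stop s) (r_cur s) (seen s).

Definition upd (g : replica -> lstate) (i : replica) (s : lstate) : replica -> lstate :=
  fun j => if j == i then s else g j.

(* Byzantine replicas take no explicit steps:
   their behaviour is captured by the shares they may contribute to certificates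
   and by the arbitrary (validly certified) proposals of Byzantine leaders. *)
Inductive step : gstate -> gstate -> Prop :=
| StepQC g lg i b :
    i \in honest -> valid_qc lg b ->
    step (GState g lg) (GState (upd g i (see_qc (g i) b)) lg)
| StepTC g lg i t :
    i \in honest -> valid_tc lg t ->
    step (GState g lg) (GState (upd g i (see_tc (g i) t)) lg)
| StepTimeout g lg i :
    i \in honest -> r_stop (g i) < r_cur (g i) ->
    step (GState g lg)
         (GState (upd g i (set_stop (g i)))
                 ((i, MTimeout (r_cur (g i)) (qc_high (g i))) :: lg))
| StepPropose g lg i txn :
    i \in honest -> i = leader (r_cur (g i)) -> r_prop (g i) < r_cur (g i) ->
    step (GState g lg)
         (GState (upd g i (set_prop (g i)))
                 ((i, MProposal (Blk (qc_high (g i)) (entered_tc (g i))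
                                     (r_cur (g i)) 0 txn)) :: lg))
| StepRecvVote g lg i B :
    i \in honest ->
    (leader (bround B) \in honest -> List.In (leader (bround B), MProposal B) lg) ->
    valid_proposal lg B -> ~~ seen (g i) (bround B) ->
    vote_ok (proc_prop (g i) B) B ->
    step (GState g lg)
         (GState (upd g i (set_vote (proc_prop (g i) B) (bround B)))
                 ((i, MVote B) :: lg))
| StepRecvNoVote g lg i B :
    i \in honest ->
    (leader (bround B) \in honest -> List.In (leader (bround B), MProposal B) lg) ->
    valid_proposal lg B -> ~~ seen (g i) (bround B) ->
    ~ vote_ok (proc_prop (g i) B) B ->
    step (GState g lg) (GState (upd g i (proc_prop (g i) B)) lg).

Inductive reachable : gstate -> Prop :=
| reach_init : reachable init_gstate
| reach_step gs gs' : reachable gs -> step gs gs' -> reachable gs'.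

Definition globally_direct_committed (gs : gstate) (B : block) : Prop :=
  exists (tc : option tcert) (v : nat) (txn : Txn) (S : {set replica}),
    [/\ f + 1 <= #|S|, S \subset honest &
        forall i, i \in S ->
          List.In (i, MVote (Blk B tc (bround B).+1 v txn)) (log gs)].

End Jolteon.

(* An honest replica votes at most once per round, and two quorums of 2f+1
   replicas share an honest one, so each round has at most one certified block.
   When f+1 honest replicas vote in round B.r+1 for a block whose QC certifies
   B, they are locked on B: every timeout they send for a round >= B.r+1
   carries a qc_high of round at least B.r.  By induction on rounds, every
   certified block C with C.r >= B.r extends B: some honest voter of C is among
   the f+1 locked replicas, and the voting rule forces the parent QC of C to
   have round at least B.r -- either it is the QC of round C.r-1, or it is at
   least as high as every qc_high of a TC whose 2f+1 senders include a locked
   replica.  Comparing the rounds of the two committed blocks concludes. *)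
From mathcomp Require Import all_boot zify.
From Stdlib Require List.

Set Implicit Arguments.
Unset Strict Implicit.
Unset Printing Implicit Defensive.

Lemma quorum_intersection (T : finType) (A B C : {set T}) :
  #|C| + #|T| < #|A| + #|B| -> exists x, [/\ x \in A, x \in B & x \notin C].
Proof.
move=> big.
have cardU : #|A :|: B| <= #|T| by apply: max_card.
have cardIC : #|A :&: B :&: C| <= #|C| by apply/subset_leq_card/subsetIr.
have := cardsUI A B; have := cardsD (A :&: B) C => cardD cardUI.
have : 0 < #|A :&: B :\: C| by lia.
by rewrite card_gt0 => /set0Pn [x]; rewrite !inE => /and3P [? ? ?]; exists x.
Qed.

Lemma mem_map_fst (T : eqType) (U : Type) (s : seq (T * U)) x :
  x \in map fst s -> exists y, List.In (x, y) s.
Proof.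
elim: s => //= -[a b] s IH; rewrite inE => /orP [/eqP -> | /IH [y in_s]].
  by exists b; left.
by exists y; right.
Qed.

Section Jolteon.

Variables (f : nat) (Txn : Type) (honest : {set 'I_(nrep f)}).

Local Notation replica := 'I_(nrep f).
Local Notation block := (block f Txn).
Local Notation lstate := (lstate f Txn).
Local Notation msg := (msg f Txn).
Local Notation tcert := (tcert f Txn).
Local Notation msglog := (seq (replica * msg)).
Local Notation Genesis := (@Genesis f Txn).
Local Notation valid_qc := (@valid_qc f Txn honest).
Local Notation valid_tc := (@valid_tc f Txn honest).
Local Notation valid_proposal := (@valid_proposal f Txn honest).

Lemma card_replica : #|{: replica}| = (3 * f).+1.
Proof. exact: card_ord. Qed.

Lemma valid_qc_incl lg lg' b : List.incl lg lg' -> valid_qc lg b -> valid_qc lg' b.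
Proof.
move=> sub [->|[S [card_S share]]]; [by left | right; exists S; split=> // i].
by move=> /share [?|?]; [left | right; apply: sub].
Qed.

Lemma valid_tc_incl lg lg' t : List.incl lg lg' -> valid_tc lg t -> valid_tc lg' t.
Proof.
move=> sub; case: t => r hs [size_hs [uniq_hs high]]; do 2!split=> //.
move=> j q /high [qc_q lt_q timeout]; split=> //; first exact: valid_qc_incl qc_q.
by case: timeout => [?|?]; [left | right; apply: sub].
Qed.

Lemma valid_proposal_incl lg lg' b :
  List.incl lg lg' -> valid_proposal lg b -> valid_proposal lg' b.
Proof.
move=> sub; case: b => // p o r v txn [qc_p tc_o].
by split=> [|t /tc_o]; [exact: valid_qc_incl qc_p | exact: valid_tc_incl].
Qed.

Lemma bround_maxqc (a b : block) : bround (maxqc a b) = maxn (bround a) (bround b).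
Proof. by rewrite /maxqc /maxn; case: ifP. Qed.

Lemma bround_foldl_maxqc (hs : seq (replica * block)) (acc : block) :
  bround acc <= bround (foldl (fun acc p => maxqc acc p.2) acc hs).
Proof.
elim: hs acc => //= x hs IH acc.
by apply: leq_trans (IH _); rewrite bround_maxqc leq_maxl.
Qed.

Lemma max_high_round_ge (t : tcert) j q :
  List.In (j, q) (tchighs t) -> bround q <= max_high_round t.
Proof.
rewrite /max_high_round; elim: (tchighs t) => //= x hs IH [-> | /IH le_q].
  exact: leq_maxl.
exact: leq_trans le_q (leq_maxr _ _).
Qed.

Definition lstate_le (s s' : lstate) := [/\ r_vote s <= r_vote s',
  bround (qc_high s) <= bround (qc_high s') & r_stop s <= r_stop s'].

Lemma lstate_le_refl (s : lstate) : lstate_le s s.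
Proof. by []. Qed.

Lemma lstate_le_trans (s1 s2 s3 : lstate) :
  lstate_le s1 s2 -> lstate_le s2 s3 -> lstate_le s1 s3.
Proof. by move=> [? ? ?] [? ? ?]; split; lia. Qed.

Lemma lstate_le_see_qc (s : lstate) b : lstate_le s (see_qc s b).
Proof. by split=> //=; rewrite bround_maxqc leq_maxl. Qed.

Lemma lstate_le_see_tc (s : lstate) t : lstate_le s (see_tc s t).
Proof. by split=> //=; apply: bround_foldl_maxqc. Qed.

Lemma lstate_le_proc_prop (s : lstate) B : lstate_le s (proc_prop s B).
Proof.
case: B => [|p o r v txn] /=; first exact: lstate_le_refl.
suff [] : lstate_le s (if o is Some t then see_tc (see_qc s p) t else see_qc s p) by [].
case: o => [t|]; last exact: lstate_le_see_qc.
exact: lstate_le_trans (lstate_le_see_qc s p) (lstate_le_see_tc _ t).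
Qed.

Lemma proc_prop_parent (s : lstate) p o r v txn :
  let s' := proc_prop s (Blk p o r v txn) in
  bround p < r_cur s' /\ bround p <= bround (qc_high s').
Proof.
case: o => [t|] /=; split.
- exact: leq_trans (leq_maxr _ _) (leq_maxl _ _).
- by apply: leq_trans (bround_foldl_maxqc _ _); rewrite bround_maxqc leq_maxr.
- exact: leq_maxr.
- by rewrite bround_maxqc leq_maxr.
Qed.

Definition voted_ok (lg : msglog) (s : lstate) (b : block) : Prop :=
  if b is Blk p otc k v txn then
    [/\ valid_proposal lg b, k <= r_vote s, bround p < k,
        bround p <= bround (qc_high s) &
        k = (bround p).+1 \/ exists t, [/\ otc = Some t, k = (tcround t).+1 &
                                          max_high_round t <= bround p]]
  else False.

Lemma voted_ok_round_gt0 lg s b : voted_ok lg s b -> 0 < bround b.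
Proof. by case: b => // p o k v txn [_ _ lt_p _ _] /=; lia. Qed.

Lemma voted_ok_mono lg lg' s s' b :
  List.incl lg lg' -> lstate_le s s' -> voted_ok lg s b -> voted_ok lg' s' b.
Proof.
move=> sub [le_vote le_high _]; case: b => // p o k v txn [prop ? ? ? ?].
by split=> //; [exact: valid_proposal_incl prop | lia | lia].
Qed.

(* [timeout_stopped] is what keeps [timeout_locked] inductive: a replica never
   votes in a round in which it has already timed out. *)
Record replica_inv (lg : msglog) (i : replica) (s : lstate) : Prop := ReplicaInv {
  voted_okP : forall b, List.In (i, MVote b) lg -> voted_ok lg s b;
  vote_unique : forall b1 b2, List.In (i, MVote b1) lg -> List.In (i, MVote b2) lg ->
    bround b1 = bround b2 -> b1 = b2;
  timeout_stopped : forall m q, List.In (i, MTimeout m q) lg -> m <= r_stop s;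
  timeout_locked : forall p otc k v txn m q,
    List.In (i, MVote (Blk p otc k v txn)) lg -> List.In (i, MTimeout m q) lg ->
    k <= m -> bround p <= bround q
}.

Definition honest_inv (gs : gstate f Txn) :=
  forall i, i \in honest -> replica_inv (log gs) i (lst gs i).

Lemma replica_inv_frame lg lg' i s s' :
  replica_inv lg i s -> lstate_le s s' -> List.incl lg lg' ->
  (forall b, List.In (i, MVote b) lg' -> List.In (i, MVote b) lg) ->
  (forall m q, List.In (i, MTimeout m q) lg' -> List.In (i, MTimeout m q) lg) ->
  replica_inv lg' i s'.
Proof.
move=> [ok uniq stopped locked] le_s sub old_votes old_timeouts; split.
- by move=> b /old_votes /ok; apply: voted_ok_mono.
- by move=> b1 b2 /old_votes ? /old_votes ?; apply: uniq.
- by move=> m q /old_timeouts /stopped; case: le_s => _ _; lia.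
- by move=> p o k v txn m q /old_votes vote /old_timeouts; apply: locked vote.
Qed.

Lemma replica_inv_state lg i s s' :
  replica_inv lg i s -> lstate_le s s' -> replica_inv lg i s'.
Proof. by move=> inv le_s; apply: replica_inv_frame inv le_s _ _ _. Qed.

Lemma replica_inv_cons_other lg i j m s :
  replica_inv lg j s -> j != i -> replica_inv ((i, m) :: lg) j s.
Proof.
move=> inv ne_ji; have old m' : List.In (j, m') ((i, m) :: lg) -> List.In (j, m') lg.
  by case=> [[eq_ij _] | //]; rewrite eq_ij eqxx in ne_ji.
apply: replica_inv_frame inv (lstate_le_refl _) (List.incl_tl _ (List.incl_refl _)) _ _.
  by move=> b /old.
by move=> m' q /old.
Qed.

Lemma replica_inv_timeout lg i s :
  replica_inv lg i s -> r_stop s < r_cur s ->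
  replica_inv ((i, MTimeout (r_cur s) (qc_high s)) :: lg) i (set_stop s).
Proof.
move=> [ok uniq stopped locked] running.
have le_s : lstate_le s (set_stop s) by split=> //=; apply: ltnW.
have old b : List.In (i, MVote b) ((i, MTimeout (r_cur s) (qc_high s)) :: lg) ->
    List.In (i, MVote b) lg by case=> [[]|].
have sub := List.incl_tl (i, MTimeout (r_cur s) (qc_high s)) (List.incl_refl lg).
split.
- by move=> b /old /ok; apply: voted_ok_mono.
- by move=> b1 b2 /old ? /old ?; apply: uniq.
- by move=> m q /= [[-> _] // | /stopped]; lia.
- move=> p o k v txn m q /old vote [[<- <-] | timeout] le_k.
    by case: (ok _ vote).
  exact: locked vote timeout le_k.
Qed.

Lemma replica_inv_vote lg i s p o k v txn (b := Blk p o k v txn) :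
  replica_inv lg i s -> valid_proposal lg b -> vote_ok (proc_prop s b) b ->
  replica_inv ((i, MVote b) :: lg) i (set_vote (proc_prop s b) k).
Proof.
move=> [ok uniq stopped locked] prop.
have [lt_cur le_high] := proc_prop_parent s p o k v txn.
move: lt_cur le_high (lstate_le_proc_prop s b); rewrite -/b.
move: (proc_prop s b) => s' lt_cur le_high [le_vote le_qc le_stop].
move=> [eq_k _ lt_vote lt_stop rule].
have le_s : lstate_le s (set_vote s' k) by split=> /=; lia.
have sub := List.incl_tl (i, MVote b) (List.incl_refl lg).
have earlier b' : List.In (i, MVote b') lg -> bround b' < k.
  by case: b' => [|p' o' k' v' txn'] /ok // [_ ? _ _ _] /=; lia.
split.
- move=> b' /= [[<-] | vote]; last exact: voted_ok_mono (ok _ vote).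
  by split=> //; [exact: valid_proposal_incl prop | rewrite eq_k].
- move=> b1 b2 /= [[<-] | vote1] [[<-] | vote2] //= eq_r.
  + by have := earlier _ vote2; rewrite -eq_r /=; lia.
  + by have := earlier _ vote1; rewrite eq_r /=; lia.
  + exact: uniq.
- by move=> m q /= [[] // | /stopped]; lia.
- move=> p' o' k' v' txn' m q /= [[<- _ <- _ _] | vote] [[] // | timeout] le_k.
  + by have := stopped _ _ timeout; lia.
  + exact: locked vote timeout le_k.
Qed.

Lemma step_honest_inv gs gs' : honest_inv gs -> step honest gs gs' -> honest_inv gs'.
Proof.
move=> + step_gs; case: step_gs
  => [g lg i b _ _ | g lg i t _ _ | g lg i _ running | g lg i txn _ _ _
     | g lg i B _ _ prop _ ok | g lg i B _ _ _ _ _] inv j /inv /=;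
  rewrite /upd; case: eqP => [-> | /eqP ne_ji] inv_j;
  try exact: replica_inv_cons_other inv_j ne_ji.
- exact: replica_inv_state inv_j (lstate_le_see_qc _ _).
- exact: inv_j.
- exact: replica_inv_state inv_j (lstate_le_see_tc _ _).
- exact: inv_j.
- exact: replica_inv_timeout.
- apply: replica_inv_frame inv_j _ (List.incl_tl _ (List.incl_refl _)) _ _ => //.
    by move=> b [[]|].
  by move=> m q [[]|].
- by case: B prop ok => // p o k v txn; apply: replica_inv_vote.
- exact: replica_inv_state inv_j (lstate_le_proc_prop _ _).
- exact: inv_j.
Qed.

Lemma reachable_honest_inv gs : reachable honest gs -> honest_inv gs.
Proof. by elim=> [i _ | ? ? _ inv /(step_honest_inv inv)]. Qed.

Section Safety.

Variable gs : gstate f Txn.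
Local Notation lg := (log gs).

Lemma valid_tc_meets (t : tcert) (S : {set replica}) :
  f + 1 <= #|S| -> S \subset honest -> valid_tc lg t ->
  exists j q, [/\ j \in S, List.In (j, q) (tchighs t) &
                  List.In (j, MTimeout (tcround t) q) lg].
Proof.
case: t => r hs card_S sub_S [size_hs [uniq_hs high]] /=.
have card_senders : #|[set x in map fst hs]| = 2 * f + 1.
  by rewrite cardsE -size_hs -(size_map fst); apply/card_uniqP.
have [|j [in_S sender_j _]] := @quorum_intersection _ S [set x in map fst hs] set0.
  by rewrite cards0 card_replica card_senders; lia.
move: sender_j; rewrite inE => /mem_map_fst [q in_hs].
exists j, q; split=> //.
by case: (high j q in_hs) => _ _; rewrite (subsetP sub_S j in_S) => -[].
Qed.

Hypothesis inv : honest_inv gs.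

Lemma committed_qc_valid (B : block) :
  globally_direct_committed honest gs B -> valid_qc lg B.
Proof.
move=> [tc [v [txn [S [card_S sub_S vote]]]]].
have [i in_S] : exists i, i \in S.
  by apply/set0Pn; rewrite -card_gt0; exact: leq_trans (leq_addl f 1) card_S.
by case: (voted_okP (inv (subsetP sub_S i in_S)) (vote i in_S)) => -[].
Qed.

Hypothesis few_byzantine : #|~: honest| <= f.

Lemma qc_quorums_share_honest_voter (C D : block) (SC SD : {set replica}) :
  2 * f + 1 <= #|SC| -> (forall i, i \in SC -> has_vote_share honest lg i C) ->
  2 * f + 1 <= #|SD| -> (forall i, i \in SD -> has_vote_share honest lg i D) ->
  exists2 i, i \in honest & List.In (i, MVote C) lg /\ List.In (i, MVote D) lg.
Proof.
move=> card_C share_C card_D share_D.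
have [|i [in_C in_D]] := @quorum_intersection _ SC SD (~: honest).
  by rewrite card_replica; lia.
rewrite inE negbK => honest_i; exists i => //.
by case: (share_C i in_C) (share_D i in_D) => [|? [|?]]; rewrite ?honest_i.
Qed.

Lemma valid_qc_round0 (C : block) : valid_qc lg C -> bround C = 0 -> C = Genesis.
Proof.
case=> [// | [S [card_S share]] round0].
have [i honest_i [vote _]] := qc_quorums_share_honest_voter card_S share card_S share.
by have := voted_ok_round_gt0 (voted_okP (inv honest_i) vote); rewrite round0.
Qed.

Lemma valid_qc_unique (C D : block) :
  valid_qc lg C -> valid_qc lg D -> bround C = bround D -> C = D.
Proof.
move=> qc_C qc_D eq_r; have [round0 | /eqP round_gt0] := eqVneq (bround C) 0.
  by rewrite (valid_qc_round0 qc_C round0) (valid_qc_round0 qc_D) -?eq_r.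
case: qc_C qc_D eq_r round_gt0 => [-> // | [SC [card_C share_C]]].
case=> [-> // | [SD [card_D share_D]]] eq_r _.
have [i honest_i [vote_C vote_D]] :=
  qc_quorums_share_honest_voter card_C share_C card_D share_D.
exact: (vote_unique (inv honest_i) vote_C vote_D eq_r).
Qed.

Section Locked.

Variables (B : block) (S : {set replica}) (tc : option tcert) (v : nat) (txn : Txn).
Hypotheses (card_S : f + 1 <= #|S|) (sub_S : S \subset honest).
Hypothesis locking_votes :
  forall i, i \in S -> List.In (i, MVote (Blk B tc (bround B).+1 v txn)) lg.

Lemma voted_parent_round_ge j p o k v' txn' :
  j \in honest -> List.In (j, MVote (Blk p o k v' txn')) lg ->
  (bround B).+1 < k -> bround B <= bround p.
Proof.
move=> honest_j vote lt_k.
case: (voted_okP (inv honest_j) vote) => [[_ tc_o] _ _ _ [eq_k | [t [eq_o eq_k le_t]]]].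
  by lia.
have [j' [q [in_S high_q timeout]]] := valid_tc_meets card_S sub_S (tc_o t eq_o).
have locked_q : bround B <= bround q.
  have honest_j' := subsetP sub_S j' in_S.
  by apply: (timeout_locked (inv honest_j') (locking_votes in_S) timeout); lia.
exact: leq_trans locked_q (leq_trans (max_high_round_ge high_q) le_t).
Qed.

Lemma locked_extends (C : block) : valid_qc lg C -> bround B <= bround C -> extends B C.
Proof.
have qc_B : valid_qc lg B by apply: committed_qc_valid; exists tc, v, txn, S.
have [n] := ubnP (bround C); elim: n C => // n IH C lt_Cn qc_C le_BC.
have [eq_r | ne_r] := eqVneq (bround C) (bround B).
  by rewrite (valid_qc_unique qc_C qc_B eq_r); constructor.
have lt_BC : bround B < bround C by rewrite ltn_neqAle eq_sym ne_r.
case: qc_C => [eq_C | [SC [card_C share_C]]]; first by rewrite eq_C in lt_BC.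
have [|j [in_C in_S _]] := @quorum_intersection _ SC S set0.
  by rewrite cards0 card_replica; lia.
have honest_j := subsetP sub_S j in_S.
have vote : List.In (j, MVote C) lg by case: (share_C j in_C); rewrite ?honest_j.
case: C lt_Cn lt_BC vote {le_BC ne_r share_C} => [// | p o k v' txn'] /= lt_kn lt_Bk vote.
have [eq_k | ne_k] := eqVneq k (bround B).+1.
  have -> : Blk p o k v' txn' = Blk B tc (bround B).+1 v txn.
    exact: (vote_unique (inv honest_j) vote (locking_votes in_S) eq_k).
  by do 2!constructor.
case: (voted_okP (inv honest_j) vote) => [[qc_p _] _ lt_p _ _].
constructor; apply: (IH p); [lia | exact: qc_p |].
by apply: voted_parent_round_ge honest_j vote _; lia.
Qed.

End Locked.

Lemma committed_extends (B C : block) :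
  globally_direct_committed honest gs B -> valid_qc lg C -> bround B <= bround C ->
  extends B C.
Proof.
move=> [tc [v [txn [S [card_S sub_S votes]]]]].
exact: (locked_extends card_S sub_S votes).
Qed.

End Safety.

End Jolteon.

Theorem theorem2 (f : nat) (Txn : Type) (honest : {set 'I_(nrep f)})
    (gs : gstate f Txn) (B B' : block f Txn) :
  #|~: honest| <= f ->
  reachable honest gs ->
  globally_direct_committed honest gs B ->
  globally_direct_committed honest gs B' ->
  extends B B' \/ extends B' B.
Proof.
move=> few_byzantine /reachable_honest_inv inv commit_B commit_B'.
have [le_r | /ltnW le_r] := leqP (bround B) (bround B').
  by left; apply: (committed_extends inv few_byzantine commit_B _ le_r);
  exact: (committed_qc_valid inv commit_B').
by right; apply: (committed_extends inv few_byzantine commit_B' _ le_r);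
  exact: (committed_qc_valid inv commit_B).
Qed.
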